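(* Let $S\subseteq\{1,\dots,p\}$ with $|S|=k$, $\delta\in(0,1]$, $R>0$, $\lambda>0$, $\alpha_1\ge\mu$, $\tau_1>0$. Let $\hat\theta,\tilde\theta\in\mathbb{R}^{p\times q}$ with $\|\hat\theta\|_{1,2}\le R$, $\|\tilde\theta\|_{1,2}\le R$, where all rows of $\hat\theta$ outside $S$ are zero, and put $\tilde\nu=\tilde\theta-\hat\theta$. Suppose there are $\hat z\in\partial\|\hat\theta\|_{1,2}$ and $\tilde z\in\partial\|\tilde\theta\|_{1,2}$ such that $\nabla\bar{\mathcal L}_n(\hat\theta)+\lambda\hat z=0$, $\langle\nabla\bar{\mathcal L}_n(\tilde\theta)+\lambda\tilde z,\hat\theta-\tilde\theta\rangle\ge0$, and $\|\hat z_{S^c}\|_{\infty,2}\le1-\delta$. Suppose also $$\langle\nabla\bar{\mathcal L}_n(\tilde\theta)-\nabla\bar{\mathcal L}_n(\hat\theta),\tilde\nu\rangle\ge(\alpha_1-\mu)\|\tilde\nu\|_F^2-\tau_1\frac{\log p}{n}\|\tilde\nu\|_{1,2}^2$$ and $\lambda\ge\frac{4R\tau_1q\log p}{\delta n}$. Then $$\|\tilde\nu\|_{1,2}\le\Big(\frac4\delta+2\Big)\sqrt k\,\|\tilde\nu\|_F.$$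
   Context: Notation: for $A\in\mathbb{R}^{p\times q}$, $A_{i:}$ row $i$; $A_S$, $A_{S^c}$ the submatrices of rows in $S$, resp. not in $S$; $\|A\|_{a,b}=(\sum_i\|A_{i:}\|_b^a)^{1/a}$ ($a=\infty$: max over $i$); $\|A\|_F$ Frobenius norm; $\langle A,B\rangle=\mathrm{tr}(A^TB)$. $\bar{\mathcal L}_n:\mathbb{R}^{p\times q}\to\mathbb{R}$ is a differentiable function (in the paper, $\bar{\mathcal L}_n(\theta)=\mathcal L_n(\theta)-\sum_i q_\lambda(\|\theta_{i:}\|_2)$ with $\mathcal L_n$ the multi-treatment least-squares loss and $q_\lambda(t)=\lambda|t|-\rho_\lambda(t)$). Subdifferential: $z\in\partial\|\theta\|_{1,2}$ iff $z_{i:}=\theta_{i:}/\|\theta_{i:}\|_2$ when $\theta_{i:}\ne0$ and $\|z_{i:}\|_2\le1$ when $\theta_{i:}=0$. *)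

From HB Require Import structures.
From mathcomp Require Import all_boot all_order all_algebra.
From mathcomp Require Import all_classical all_reals all_analysis.
Set Implicit Arguments. Unset Strict Implicit. Unset Printing Implicit Defensive.
Import Order.TTheory GRing.Theory Num.Theory.
Import numFieldNormedType.Exports.
Local Open Scope ring_scope.

Section Defs.
Variables (R : realType) (p q : nat).

Definition row2 (A : 'M[R]_(p, q)) (i : 'I_p) : R :=
  Num.sqrt (\sum_(j < q) A i j ^+ 2).

Definition norm12 (A : 'M[R]_(p, q)) : R := \sum_(i < p) row2 A i.

(* ||A_{S^c}||_{infty,2} = max_{i notin S} ||A_{i:}||_2 (0 if S^c empty) *)
Definition norminf2_out (S : {set 'I_p}) (A : 'M[R]_(p, q)) : R :=
  \big[Num.max/0]_(i < p | i \notin S) row2 A i.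

Definition frob (A : 'M[R]_(p, q)) : R :=
  Num.sqrt (\sum_(i < p) \sum_(j < q) A i j ^+ 2).

Definition inner (A B : 'M[R]_(p, q)) : R := \tr (A^T *m B).

(* z is in the subdifferential of ||.||_{1,2} at theta *)
Definition subgrad12 (theta z : 'M[R]_(p, q)) : Prop :=
  forall i : 'I_p,
    (row i theta != 0 -> row i z = (row2 theta i)^-1 *: row i theta) /\
    (row i theta = 0 -> row2 z i <= 1).

End Defs.

From HB Require Import structures.
From mathcomp Require Import all_boot all_order all_algebra.
From mathcomp Require Import all_classical all_reals all_analysis.
From mathcomp Require Import ring lra.
Set Implicit Arguments. Unset Strict Implicit. Unset Printing Implicit Defensive.
Import Order.TTheory GRing.Theory Num.Theory.
Import numFieldNormedType.Exports.
Local Open Scope ring_scope.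

(* Write nu = thetat - thetah, s = sum_{i notin S} ||nu_i||_2 and
   t = sum_{i in S} ||nu_i||_2, so that ||nu||_{1,2} = t + s.
   1. The two first-order conditions give
        <grad L(thetat) - grad L(thetah), nu> <= lam <zh - zt, nu>.
   2. Row by row, subgradients of the Euclidean norm are monotone, and on a
      row outside S (where thetah vanishes and ||zh_i|| <= 1 - delta) the gap
      is at least delta ||nu_i||; hence <zh - zt, nu> <= - delta s.
   3. Combined with the restricted strong convexity hypothesis this yields
      lam delta s <= c ||nu||_{1,2}^2 with c = tau1 log p / n; since
      ||nu||_{1,2} <= 2 Rad and lam delta >= 4 Rad c, a scalar argument
      shows s <= t (the "cone condition").
   4. Cauchy-Schwarz bounds t <= sqrt |S| ||nu||_F, so
      ||nu||_{1,2} <= 2 t <= (4/delta + 2) sqrt |S| ||nu||_F. *)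

Section FiniteSums.
Variables (R : rcfType) (I : finType) (P : pred I).
Implicit Types a b : I -> R.

Lemma sumsq_ge0 a : 0 <= \sum_(i | P i) a i ^+ 2.
Proof. by apply: sumr_ge0 => i _; exact: sqr_ge0. Qed.

Lemma sumsq_eq0 a : \sum_(i | P i) a i ^+ 2 = 0 -> forall i, P i -> a i = 0.
Proof.
move=> sum0 i Pi; have := psumr_eq0P (fun i _ => sqr_ge0 (a i)) sum0 Pi.
by move/eqP; rewrite sqrf_eq0 => /eqP.
Qed.

(* Cauchy-Schwarz: 2 A B (sum a b) <= sum (a^2 B^2 + b^2 A^2) = 2 (A B)^2,
   where A, B are the Euclidean norms; the degenerate case A B = 0 forces
   one of the vectors to vanish. *)
Lemma cauchy_schwarz a b :
  \sum_(i | P i) a i * b i <=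
  Num.sqrt (\sum_(i | P i) a i ^+ 2) * Num.sqrt (\sum_(i | P i) b i ^+ 2).
Proof.
have := sqr_sqrtr (sumsq_ge0 a); have := sqr_sqrtr (sumsq_ge0 b).
have := sqrtr_ge0 (\sum_(i | P i) a i ^+ 2).
have := sqrtr_ge0 (\sum_(i | P i) b i ^+ 2).
set A2 := \sum_(i | P i) a i ^+ 2; set B2 := \sum_(i | P i) b i ^+ 2.
set A := Num.sqrt A2; set B := Num.sqrt B2 => B0 A0 sqB sqA.
have amgm : 2 * (A * B) * \sum_(i | P i) a i * b i <= 2 * (A * B) * (A * B).
  have -> : 2 * (A * B) * (A * B) =
      \sum_(i | P i) (a i ^+ 2 * B ^+ 2 + b i ^+ 2 * A ^+ 2).
    by rewrite big_split /= -!mulr_suml -/A2 -/B2 -{1}sqA -{1}sqB; ring.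
  rewrite mulr_sumr; apply: ler_sum => i _; rewrite -subr_ge0.
  have -> : a i ^+ 2 * B ^+ 2 + b i ^+ 2 * A ^+ 2 - 2 * (A * B) * (a i * b i)
      = (a i * B - b i * A) ^+ 2 by ring.
  exact: sqr_ge0.
have [ABpos|AB_le0] := ltP 0 (A * B).
  by move: amgm; rewrite ler_pM2l // mulr_gt0.
have : A * B == 0 by rewrite eq_le AB_le0 mulr_ge0.
rewrite mulf_eq0 => /orP[]/eqP norm0.
- have a0 : A2 = 0 by rewrite -sqA norm0 expr0n.
  by rewrite big1 ?norm0 ?mul0r // => i Pi; rewrite (sumsq_eq0 a0 Pi) mul0r.
- have b0 : B2 = 0 by rewrite -sqB norm0 expr0n.
  by rewrite big1 ?norm0 ?mulr0 // => i Pi; rewrite (sumsq_eq0 b0 Pi) mulr0.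
Qed.

(* Minkowski (triangle inequality for the Euclidean norm), via
   |a - b|^2 = |a|^2 + |b|^2 - 2 <a, b> and Cauchy-Schwarz. *)
Lemma minkowski a b :
  Num.sqrt (\sum_(i | P i) (a i - b i) ^+ 2) <=
  Num.sqrt (\sum_(i | P i) a i ^+ 2) + Num.sqrt (\sum_(i | P i) b i ^+ 2).
Proof.
have := cauchy_schwarz a (fun i => - b i).
under [X in _ <= _ * Num.sqrt X]eq_bigr do rewrite sqrrN.
have := sqr_sqrtr (sumsq_ge0 a); have := sqr_sqrtr (sumsq_ge0 b).
have := sqrtr_ge0 (\sum_(i | P i) a i ^+ 2).
have := sqrtr_ge0 (\sum_(i | P i) b i ^+ 2).
set A2 := \sum_(i | P i) a i ^+ 2; set B2 := \sum_(i | P i) b i ^+ 2.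
set A := Num.sqrt A2; set B := Num.sqrt B2 => B0 A0 sqB sqA cs.
have -> : \sum_(i | P i) (a i - b i) ^+ 2 =
    A2 + B2 + 2 * \sum_(i | P i) a i * - b i.
  by rewrite mulr_sumr -!big_split /=; apply: eq_bigr => i _; ring.
rewrite -(ger0_norm (addr_ge0 A0 B0)) -sqrtr_sqr ler_sqrt ?sqr_ge0 //.
by rewrite -sqA -sqB; nra.
Qed.

End FiniteSums.

Section RowNorms.
Variables (R : realType) (p q : nat).
Implicit Types (A B M theta z th tt zh zt gh gt : 'M[R]_(p, q)).

Lemma inner_sum A B : inner A B = \sum_i \sum_j A i j * B i j.
Proof.
rewrite /inner /mxtrace exchange_big /=; apply: eq_bigr => j _.
by rewrite mxE; apply: eq_bigr => i _; rewrite mxE.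
Qed.

Lemma innerDl A B M : inner (A + B) M = inner A M + inner B M.
Proof.
rewrite !inner_sum -big_split; apply: eq_bigr => i _.
by rewrite -big_split; apply: eq_bigr => j _; rewrite mxE mulrDl.
Qed.

Lemma innerZl (c : R) A B : inner (c *: A) B = c * inner A B.
Proof.
rewrite !inner_sum mulr_sumr; apply: eq_bigr => i _.
by rewrite mulr_sumr; apply: eq_bigr => j _; rewrite mxE mulrA.
Qed.

Lemma innerNr A B : inner A (- B) = - inner A B.
Proof.
rewrite !inner_sum -sumrN; apply: eq_bigr => i _.
by rewrite -sumrN; apply: eq_bigr => j _; rewrite mxE mulrN.
Qed.

Lemma row_entry M i j : row i M 0 j = M i j.
Proof. by rewrite mxE. Qed.

Lemma row2_ge0 M i : 0 <= row2 M i.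
Proof. exact: sqrtr_ge0. Qed.

Lemma row2_sq M i : row2 M i ^+ 2 = \sum_j M i j ^+ 2.
Proof. by rewrite /row2 sqr_sqrtr // sumsq_ge0. Qed.

Lemma row2_row0 M i : row i M = 0 -> row2 M i = 0.
Proof.
move=> r0; rewrite /row2 big1 ?sqrtr0 // => j _.
by rewrite -row_entry r0 mxE expr0n.
Qed.

Lemma row2_eq0 M i : row2 M i = 0 -> row i M = 0.
Proof.
move=> r0; have sq0 : \sum_j M i j ^+ 2 = 0 by rewrite -row2_sq r0 expr0n.
by apply/rowP => j; rewrite !mxE (sumsq_eq0 sq0).
Qed.

Lemma row2_sub A B i : row2 (A - B) i <= row2 A i + row2 B i.
Proof.
rewrite /row2; under eq_bigr do rewrite !mxE.
exact: (minkowski _ (fun j => A i j) (fun j => B i j)).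
Qed.

Lemma norm12_sub A B : norm12 (A - B) <= norm12 A + norm12 B.
Proof.
by rewrite /norm12 -big_split; apply: ler_sum => i _; exact: row2_sub.
Qed.

Lemma frob_sq M : frob M ^+ 2 = \sum_i row2 M i ^+ 2.
Proof.
rewrite /frob sqr_sqrtr; last by apply: sumr_ge0 => i _; exact: sumsq_ge0.
by apply: eq_bigr => i _; rewrite row2_sq.
Qed.

Lemma subgrad12_dot theta z i : subgrad12 theta z ->
  \sum_j z i j * theta i j = row2 theta i.
Proof.
move=> /(_ i) [nz_row _]; have [r0|rn0] := eqVneq (row i theta) 0.
  rewrite row2_row0 // big1 // => j _.
  by rewrite -[theta i j]row_entry r0 mxE mulr0.
have n0 : row2 theta i != 0 by apply: contra rn0 => /eqP/row2_eq0 ->.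
under eq_bigr => j _ do
  rewrite -[z i j]row_entry (nz_row rn0) !mxE -mulrA -expr2.
by rewrite -mulr_sumr -row2_sq expr2 mulKf.
Qed.

Lemma subgrad12_row2_le1 theta z i : subgrad12 theta z -> row2 z i <= 1.
Proof.
move=> /(_ i) [nz_row z_row]; have [r0|rn0] := eqVneq (row i theta) 0.
  exact: z_row.
have n0 : row2 theta i != 0 by apply: contra rn0 => /eqP/row2_eq0 ->.
rewrite /row2; under eq_bigr => j _ do
  rewrite -[z i j]row_entry (nz_row rn0) !mxE exprMn exprVn.
by rewrite -mulr_sumr -row2_sq mulVf ?sqrtr1 // expf_neq0.
Qed.

Lemma subgrad12_pair_le theta z theta2 i : subgrad12 theta z ->
  \sum_j z i j * theta2 i j <= row2 theta2 i.
Proof.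
move=> sz; apply: le_trans (cauchy_schwarz _ _ _) _; rewrite -/(row2 z i).
by rewrite -[leRHS]mul1r ler_wpM2r ?row2_ge0 // (subgrad12_row2_le1 _ sz).
Qed.

Lemma row_gap_expand th tt zh zt i :
  \sum_j (zh i j - zt i j) * (tt - th) i j =
  \sum_j zh i j * tt i j - \sum_j zh i j * th i j
  - \sum_j zt i j * tt i j + \sum_j zt i j * th i j.
Proof.
by rewrite -!sumrB -big_split /=; apply: eq_bigr => j _; rewrite !mxE; ring.
Qed.

Lemma subgrad12_row_monotone th tt zh zt i :
  subgrad12 th zh -> subgrad12 tt zt ->
  \sum_j (zh i j - zt i j) * (tt - th) i j <= 0.
Proof.
move=> sh st; rewrite row_gap_expand (subgrad12_dot _ sh) (subgrad12_dot _ st).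
have := subgrad12_pair_le tt i sh; have := subgrad12_pair_le th i st; lra.
Qed.

Lemma subgrad12_row_gap (delta : R) th tt zh zt i :
  subgrad12 tt zt -> row i th = 0 -> row2 zh i <= 1 - delta ->
  \sum_j (zh i j - zt i j) * (tt - th) i j <= - (delta * row2 (tt - th) i).
Proof.
move=> st r0 zh_small.
have th0 j : th i j = 0 by rewrite -row_entry r0 mxE.
have -> : row2 (tt - th) i = row2 tt i.
  by rewrite /row2; under eq_bigr do rewrite !mxE th0 subr0.
have pair0 w : \sum_j w i j * th i j = 0.
  by rewrite big1 // => j _; rewrite th0 mulr0.
rewrite row_gap_expand (subgrad12_dot _ st) !pair0.
have cs : \sum_j zh i j * tt i j <= row2 zh i * row2 tt i.
  exact: cauchy_schwarz.
have := row2_ge0 tt i; nra.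
Qed.

Lemma first_order_gap (lam : R) gh gt th tt zh zt :
  gh + lam *: zh = 0 -> 0 <= inner (gt + lam *: zt) (th - tt) ->
  inner (gt - gh) (tt - th) <= lam * inner (zh - zt) (tt - th).
Proof.
move=> /eqP; rewrite addr_eq0 => /eqP -> opt_t.
have -> : gt - - (lam *: zh) = (gt + lam *: zt) + lam *: (zh - zt).
  by rewrite opprK scalerBr addrACA subrr addr0.
rewrite innerDl innerZl -opprB innerNr; lra.
Qed.

Lemma norminf2_out_row (S : {set 'I_p}) M i :
  i \notin S -> row2 M i <= norminf2_out S M.
Proof. exact: (le_bigmax_cond 0 (row2 M)). Qed.

Lemma subgrad12_gap (S : {set 'I_p}) (delta : R) th tt zh zt :
  subgrad12 th zh -> subgrad12 tt zt ->
  (forall i, i \notin S -> row i th = 0) -> norminf2_out S zh <= 1 - delta ->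
  inner (zh - zt) (tt - th) <=
    - (delta * \sum_(i | i \notin S) row2 (tt - th) i).
Proof.
move=> sh st supp zh_small; rewrite inner_sum.
under eq_bigr do under eq_bigr do rewrite [(zh - zt) _ _]mxE [(- zt) _ _]mxE.
rewrite (bigID (mem S)) /= -[leRHS]add0r.
apply: lerD.
  by apply: sumr_le0 => i _; exact: subgrad12_row_monotone.
rewrite mulr_sumr -sumrN; apply: ler_sum => i iS.
apply: subgrad12_row_gap st (supp _ iS) _.
exact: le_trans (norminf2_out_row _ iS) zh_small.
Qed.

(* Cauchy-Schwarz against the indicator of S: the part of ||M||_{1,2} on S
   is at most sqrt |S| ||M||_F. *)
Lemma norm12_on_le (S : {set 'I_p}) M :
  \sum_(i in S) row2 M i <= Num.sqrt #|S|%:R * frob M.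
Proof.
have := cauchy_schwarz (mem S) (row2 M) (fun _ => 1).
have -> : \sum_(i in S) (1 : R) ^+ 2 = #|S|%:R by rewrite expr1n sumr_const.
under eq_bigr do rewrite mulr1.
rewrite mulrC => /le_trans; apply; apply: ler_wpM2l; first exact: sqrtr_ge0.
have F0 : 0 <= frob M by exact: sqrtr_ge0.
rewrite -(ger0_norm F0) -sqrtr_sqr ler_sqrt ?sqr_ge0 //.
rewrite frob_sq [leRHS](bigID (mem S)) /= lerDl.
by apply: sumr_ge0 => i _; exact: sqr_ge0.
Qed.

Lemma row2_nocol M i : q = 0%N -> row2 M i = 0.
Proof.
move=> q0; rewrite /row2 big1 ?sqrtr0 // => j _.
by move: (ltn_ord j); rewrite {2}q0.
Qed.

End RowNorms.

(* Scalar core of the cone condition: if lam delta s <= c N^2 with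
   N = t + s <= 2 Rad and 4 Rad c <= lam delta, then s <= t. Indeed
   lam delta s <= 2 Rad c N <= lam delta (s + t) / 2. *)
Lemma cone_condition (R : realFieldType) (s t N Rad c ld : R) :
  0 <= s -> 0 <= t -> N = t + s -> N <= 2 * Rad -> 0 <= c -> 0 < ld ->
  4 * Rad * c <= ld -> ld * s <= c * N ^+ 2 -> s <= t.
Proof.
move=> s0 t0 defN N_le c0 ld0 ld_ge key.
have N0 : 0 <= N by rewrite defN addr_ge0.
have cN : 0 <= c * N * (2 * Rad - N) by rewrite !mulr_ge0 // subr_ge0.
have ldN : 0 <= (ld - 4 * Rad * c) * N by rewrite mulr_ge0 // subr_ge0.
have : ld * (s - t) <= 0 by nra.
by rewrite pmulr_rle0 // subr_le0.
Qed.

(* log p >= 0 for every natural p (ln 0 = 0 by convention). *)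
Lemma ln_nat_ge0 (R : realType) (m : nat) : 0 <= ln (m%:R : R).
Proof.
have [->|m_gt0] := posnP m; first by rewrite ln0.
by apply: ln_ge0; rewrite ler1n.
Qed.

Lemma lam_dominates (R : realType) (p q n : nat) (delta Rad lam tau1 : R) :
  (0 < n)%N -> (0 < q)%N -> 0 < delta -> 0 < Rad -> 0 < tau1 ->
  lam >= 4 * Rad * tau1 * q%:R * ln p%:R / (delta * n%:R) ->
  4 * Rad * (tau1 * (ln p%:R / n%:R)) <= lam * delta.
Proof.
move=> n_gt0 q_gt0 delta0 Rad0 tau0.
have n0 : 0 < (n%:R : R) by rewrite ltr0n.
rewrite ler_pdivrMr ?mulr_gt0 // => lam_ge.
have -> : 4 * Rad * (tau1 * (ln p%:R / n%:R)) = 4 * Rad * tau1 * ln p%:R / n%:R.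
  by rewrite !mulrA.
rewrite ler_pdivrMr // -[lam * delta * _]mulrA; apply: le_trans lam_ge.
rewrite -[leRHS]mulrA [q%:R * _]mulrC [leRHS]mulrA ler_peMr ?ler1n //.
by rewrite !mulr_ge0 ?ln_nat_ge0 // ltW.
Qed.

Theorem lemma10 (R : realType) (p q n : nat) (S : {set 'I_p})
  (L : 'M[R]_(p, q) -> R) (gradL : 'M[R]_(p, q) -> 'M[R]_(p, q))
  (delta Rad lam alpha1 mu tau1 : R)
  (thetah thetat zh zt : 'M[R]_(p, q)) :
  (0 < n)%N ->
  (forall th : 'M[R]_(p, q), differentiable L th) ->
  (forall th H : 'M[R]_(p, q), 'D_H L th = inner (gradL th) H) ->
  0 < delta -> delta <= 1 -> 0 < Rad -> 0 < lam -> mu <= alpha1 -> 0 < tau1 ->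
  norm12 thetah <= Rad -> norm12 thetat <= Rad ->
  (forall i : 'I_p, i \notin S -> row i thetah = 0) ->
  subgrad12 thetah zh -> subgrad12 thetat zt ->
  gradL thetah + lam *: zh = 0 ->
  0 <= inner (gradL thetat + lam *: zt) (thetah - thetat) ->
  norminf2_out S zh <= 1 - delta ->
  inner (gradL thetat - gradL thetah) (thetat - thetah) >=
    (alpha1 - mu) * frob (thetat - thetah) ^+ 2
    - tau1 * (ln p%:R / n%:R) * norm12 (thetat - thetah) ^+ 2 ->
  lam >= 4 * Rad * tau1 * q%:R * ln p%:R / (delta * n%:R) ->
  norm12 (thetat - thetah) <=
    (4 / delta + 2) * Num.sqrt (#|S|%:R) * frob (thetat - thetah).
Proof.
move=> n_gt0 _ _ delta0 _ Rad0 lam0 mu_le tau0 normh normt supp sh st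
  opt_h opt_t zh_small rsc lam_ge.
set nu := thetat - thetah; set c := tau1 * (ln p%:R / n%:R).
set s := \sum_(i | i \notin S) row2 nu i; set t := \sum_(i in S) row2 nu i.
have s0 : 0 <= s by apply: sumr_ge0 => i _; exact: row2_ge0.
have t0 : 0 <= t by apply: sumr_ge0 => i _; exact: row2_ge0.
have split_nu : norm12 nu = t + s by rewrite /norm12 (bigID (mem S)).
have key : lam * delta * s <= c * norm12 nu ^+ 2.
  have gap := first_order_gap opt_h opt_t.
  have := ler_wpM2l (ltW lam0) (subgrad12_gap sh st supp zh_small).
  have am : 0 <= alpha1 - mu by rewrite subr_ge0.
  have := mulr_ge0 am (sqr_ge0 (frob nu)).
  have -> : lam * - (delta * s) = - (lam * delta * s) by rewrite mulrN mulrA.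
  rewrite -/nu -/s -/c in rsc gap *; lra.
have cone : s <= t.
  have [q0|q_gt0] := posnP q.
    by rewrite /s big1 // => i _; exact: row2_nocol.
  apply: (cone_condition (Rad := Rad) s0 t0 split_nu _ _ _ _ key).
  - by apply: le_trans (norm12_sub _ _) _; lra.
  - by rewrite mulr_ge0 ?divr_ge0 ?ln_nat_ge0 // ltW.
  - exact: mulr_gt0.
  - exact: lam_dominates n_gt0 q_gt0 delta0 Rad0 tau0 lam_ge.
have on_S := norm12_on_le S nu; rewrite -/t in on_S.
have KF0 := mulr_ge0 (sqrtr_ge0 #|S|%:R) (sqrtr_ge0 _ : 0 <= frob nu).
have extra : 0 <= 4 / delta * (Num.sqrt #|S|%:R * frob nu).
  by rewrite mulr_ge0 // divr_ge0 // ltW.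
rewrite split_nu -mulrA mulrDl; lra.
Qed.
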